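(* Consider the lattice Boltzmann scheme described in the context under acoustic scaling ($\lambda>0$ fixed as $\Delta x\to 0$), with a local initialisation $w\in\mathbb{R}^q$ satisfying $w_1=1$ and, for every $r\in\{2,\dots,q\}$ such that the operator $\mathcal{G}_{1r}$ is nonzero, $w_r=\epsilon_r$. Then for every $n\in\mathbb{N}^*$ the modified equation of the $n$-th starting scheme reduces at order $O(1)$ to $\phi(0,x)=\phi(0,x)+O(\Delta x)$ and at the next order to $$\partial_t\phi(0,x)+\lambda\Big(\mathcal{G}_{11}+\sum_{r=2}^q\mathcal{G}_{1r}\epsilon_r\Big)\phi(0,x)=O(\Delta x),\qquad x\in\mathbb{R}^d,$$ so that the starting schemes are consistent at order $O(\Delta x)$ with the modified equation $\partial_t\phi+\lambda(\mathcal{G}_{11}+\sum_{r=2}^q\mathcal{G}_{1r}\epsilon_r)\phi=O(\Delta x)$ of the bulk finite difference scheme (evaluated at $t=0$). Moreover the initial datum of the conserved moment feeding the bulk and starting schemes equals the point-wise discretisation of the initial datum of the Cauchy problem.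
   Context: Fix $d\ge 1$, $q\ge 1$, velocities $c_1,\dots,c_q\in\mathbb{Z}^d$, invertible $M\in GL_q(\mathbb{R})$, $S=\mathrm{diag}(s_1,\dots,s_q)$ with $s_i\in(0,2]$ for $i\ge 2$, $s_1\in\mathbb{R}$, and $\epsilon\in\mathbb{R}^q$ with $\epsilon_1=1$; $K=I-S(I-\epsilon e_1^T)$. Space step $\Delta x$, lattice velocity $\lambda$, $\Delta t=\Delta x/\lambda$. Shifts $(x_\ell\phi)(x)=\phi(x-\Delta x e_\ell)$, $x^c=x_1^{c_1}\cdots x_d^{c_d}$; $T=M\mathrm{diag}(x^{c_1},\dots,x^{c_q})M^{-1}$, $E=TK$; time shift $(z\phi)(t)=\phi(t+\Delta t)$. The scheme is $m(t+\Delta t,\cdot)=Em(t,\cdot)$ with conserved moment $m_1$, targeting $\partial_t u+V\cdot\nabla u=0$, $u(0,\cdot)=u^\circ$; $m_1^\circ$ is the point-wise lattice discretisation of $u^\circ$. $\mathcal{G}=M\mathrm{diag}(c_1\cdot\nabla,\dots,c_q\cdot\nabla)M^{-1}$. Initialisation $m(0,x)=w m_1^\circ(x)$. The $n$-th starting scheme is $m_1(n\Delta t,x)=(E^nw)_1m_1^\circ(x)$; its modified equation is obtained by substituting a smooth $\phi$ into $(z^n\phi)(0,x)=((E^nw)_1\phi(0,\cdot))(x)$, Taylor-expanding in $\Delta x$ and dividing the first-order terms by $n\Delta x/\lambda$. The bulk finite difference scheme is $z^{Q+1-q}\det(zI-E)m_1=0$, where $Q$ is the number of $i\in\{2,\dots,q\}$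 with $s_i\neq1$; its modified equation at leading order is $\partial_t\phi+\lambda(\mathcal{G}_{11}+\sum_{r\ge2}\mathcal{G}_{1r}\epsilon_r)\phi=O(\Delta x)$. *)

From HB Require Import structures.
From mathcomp Require Import all_boot all_order all_algebra.
From mathcomp Require Import all_classical all_reals all_analysis.
Set Implicit Arguments. Unset Strict Implicit. Unset Printing Implicit Defensive.
Import Order.TTheory GRing.Theory Num.Theory.
Import numFieldNormedType.Exports.
Local Open Scope ring_scope.

Section LBM.
Variable R : realType.

Definition evec (n : nat) (i : 'I_n) : 'rV[R]_n := delta_mx 0 i.

Fixpoint iter_partial (n : nat) (idx : seq 'I_n) (f : 'rV[R]_n -> R) : 'rV[R]_n -> R :=
  match idx with
  | [::] => f
  | i :: idx' => fun z => derive (iter_partial idx' f) z (evec i)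
  end.

Definition smooth (n : nat) (f : 'rV[R]_n -> R) : Prop :=
  (forall (idx : seq 'I_n) (i : 'I_n) (z : 'rV[R]_n),
      derivable (iter_partial idx f) z (evec i)) /\
  (forall idx : seq 'I_n, continuous (iter_partial idx f)).

Definition smooth_tx (d : nat) (phi : R -> 'rV[R]_d -> R) : Prop :=
  smooth (fun z : 'rV[R]_(1 + d) => phi (lsubmx z 0 0) (rsubmx z)).

(* q.+1 velocities indexed by 'I_q.+1 (index ord0 is the paper's index 1,
   i.e. the conserved moment), space dimension d. *)

Definition cvec (d q : nat) (c : 'I_q.+1 -> 'I_d -> int) (k : 'I_q.+1) : 'rV[R]_d :=
  \row_l (c k l)%:~R.

Definition Kmat (q : nat) (s eps : 'I_q.+1 -> R) : 'M[R]_q.+1 :=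
  1%:M - diag_mx (\row_i s i) *m (1%:M - (\col_i eps i) *m delta_mx 0 ord0).

(* One time step m |-> E m with E = T K, T = M diag(x^{c_1},...,x^{c_q}) M^{-1},
   (x^{c} g)(y) = g(y - dx c). *)
Definition stepE (d q : nat) (c : 'I_q.+1 -> 'I_d -> int) (M : 'M[R]_q.+1)
    (s eps : 'I_q.+1 -> R) (dx : R)
    (m : 'I_q.+1 -> 'rV[R]_d -> R) : 'I_q.+1 -> 'rV[R]_d -> R :=
  fun i y =>
    \sum_(k < q.+1) \sum_(j < q.+1)
       M i k * invmx M k j *
       (\sum_(j' < q.+1) Kmat s eps j j' * m j' (y - dx *: cvec c k)).

Definition init (d q : nat) (w : 'I_q.+1 -> R) (m1o : 'rV[R]_d -> R) :
    'I_q.+1 -> 'rV[R]_d -> R :=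
  fun j y => w j * m1o y.

Definition start_op (d q : nat) (c : 'I_q.+1 -> 'I_d -> int) (M : 'M[R]_q.+1)
    (s eps : 'I_q.+1 -> R) (dx : R) (n : nat) (w : 'I_q.+1 -> R)
    (phi0 : 'rV[R]_d -> R) : 'rV[R]_d -> R :=
  iter n (stepE c M s eps dx) (init w phi0) ord0.

(* G = M diag(c_1.grad, ..., c_q.grad) M^{-1}: the entry G_ij is the first-order
   operator a_ij . grad with coefficient vector a_ij = sum_k M_ik (M^-1)_kj c_k *)
Definition Gcoef (d q : nat) (c : 'I_q.+1 -> 'I_d -> int) (M : 'M[R]_q.+1)
    (i j : 'I_q.+1) : 'rV[R]_d :=
  \sum_(k < q.+1) (M i k * invmx M k j) *: cvec c k.

Definition Gop (d q : nat) (c : 'I_q.+1 -> 'I_d -> int) (M : 'M[R]_q.+1)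
    (i j : 'I_q.+1) (f : 'rV[R]_d -> R) (x : 'rV[R]_d) : R :=
  derive f x (Gcoef c M i j).

Definition lattice_discr (d : nat) (u0 : 'rV[R]_d -> R) (dx : R) (k : 'I_d -> int) : R :=
  u0 (dx *: \row_l (k l)%:~R).

End LBM.

(* Each step of the scheme mixes the moments and shifts them along the
   velocities, so from the local initialisation the n-th starting scheme is a
   finite weighted sum of shifts: (E^n w)_1 phi0 (x) = sum_p a_p phi0 (x - dx v_p).
   Collisions preserve the conserved moment, so sum_p a_p = 1, and they fix the
   components r with G_1r <> 0 at their equilibrium value eps_r, on which w
   starts; hence every step adds the same drift sum_r eps_r G_1r to the first
   moment sum_p a_p v_p, which is n times the drift after n steps. Taylor
   expansions of phi in space and in time with O(dx^2) remainders then give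
   both orders of the modified equation. *)

From HB Require Import structures.
From mathcomp Require Import all_boot all_order all_algebra.
From mathcomp Require Import all_classical all_reals all_analysis.
From mathcomp Require Import ring.
Import Order.TTheory GRing.Theory Num.Theory.
Import numFieldNormedType.Exports.
Set Implicit Arguments. Unset Strict Implicit.
Local Open Scope classical_set_scope.
Local Open Scope ring_scope.

Section Partials.
Variables (R : realType) (n : nat).
Implicit Types (F : 'rV[R]_n -> R) (y z p v : 'rV[R]_n).

Definition in_box z (r : R) y := forall m, `|y 0 m - z 0 m| < r.

Lemma continuous_bounded_box (I : finType) (f : I -> 'rV[R]_n -> R) z :
  (forall i, continuous (f i)) ->
  exists2 r : R, 0 < r & exists2 B : R, 0 <= B &
    forall y, in_box z r y -> forall i, `|f i y| <= B.
Proof.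
move=> fc.
have : \forall y \near z, forall i, `|f i z - f i y| < 1.
  apply: (@filter_forall _ I (fun i y => `|f i z - f i y| < 1) (nbhs z)) => i.
  by move: (fc i z) => /cvgrPdist_lt /(_ 1 ltr01).
move=> /nbhs_ballP [r r0 Hr]; exists r => //.
exists (\big[Num.max/0]_i (`|f i z| + 1)).
  by elim/big_ind: _ => // a b a0 b0; rewrite le_max a0.
move=> y yz i.
apply: le_trans (le_bigmax 0 (fun i => `|f i z| + 1) i).
have /ltW fy1 : `|f i z - f i y| < 1.
  apply: (Hr y); split => // a b; rewrite /ball /= (ord1 a) distrC; exact: yz.
rewrite -[f i y](subrK (f i z)) (le_trans (ler_normD _ _)) // addrC lerD2l.
by rewrite distrC.
Qed.

Lemma MVT_origin (f df : R -> R) :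
  (forall t, is_derive t (1 : R) f (df t)) ->
  forall a, exists2 th, `|th| <= `|a| & f a - f 0 = df th * a.
Proof.
move=> fd a.
have fc b c : {within `[b, c], continuous f}.
  by apply: derivable_within_continuous => t _; have [] := fd t.
have [a0|a0] := leP 0 a.
  have [th] := MVT_segment a0 (fun t _ => fd t) (fc 0 a).
  rewrite in_itv /= subr0 => /andP[th0 tha] ->.
  by exists th; rewrite // !ger0_norm // (le_trans th0 tha).
have [th] := MVT_segment (ltW a0) (fun t _ => fd t) (fc a 0).
rewrite in_itv /= sub0r mulrN => /andP[ath th0] E.
exists th; first by rewrite !ler0_norm ?lerN2 // ltW.
by rewrite -[LHS]opprK opprB E opprK.
Qed.

Lemma is_derive_line F y v :
  (forall t : R, derivable F (t *: v + y) v) ->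
  forall t : R, is_derive t (1 : R) (fun s => F (s *: v + y)) ('D_v F (t *: v + y)).
Proof.
move=> Fd t.
have -> : (fun s => F (s *: v + y)) = F \o (fun s => s *: v + y) by [].
have E : (fun h : R => h^-1 *: ((F \o (fun s => s *: v + y) \o shift t) (h *: 1) - F (t *: v + y)))
  = (fun h : R => h^-1 *: ((F \o shift (t *: v + y)) (h *: v) - F (t *: v + y))).
  by apply/funext => h /=; rewrite [_%:A]mulr1 scalerDl addrA.
by split; rewrite /derivable /derive /= E //; apply: Fd.
Qed.

Definition stair z p (k : nat) : 'rV[R]_n :=
  \row_m (if (m < k)%N then p 0 m else z 0 m).

Lemma stair0 z p : stair z p 0 = z.
Proof. by apply/rowP => m; rewrite !mxE. Qed.

Lemma stairn z p : stair z p n = p.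
Proof. by apply/rowP => m; rewrite !mxE ltn_ord. Qed.

Lemma stairS z p (l : 'I_n) :
  stair z p l.+1 = (p 0 l - z 0 l) *: evec R l + stair z p l.
Proof.
apply/rowP => m; rewrite !mxE eqxx /= ltnS leq_eqVlt.
have [->|lm] := eqVneq m l; first by rewrite eqxx ltnn mulr1 subrK.
by rewrite mulr0 add0r; have /negbTE -> : (m : nat) != l by [].
Qed.

(* Walk from z to p one coordinate at a time along [stair z p] and apply the
   one-dimensional mean value theorem on each leg. *)
Lemma mean_value_partials F :
  (forall y (l : 'I_n), derivable F y (evec R l)) ->
  forall z p, exists xi : 'I_n -> 'rV[R]_n,
    (forall l m, `|xi l 0 m - z 0 m| <= `|p 0 m - z 0 m|) /\
    F p - F z = \sum_(l < n) (p 0 l - z 0 l) * 'D_(evec R l) F (xi l).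
Proof.
move=> Fd z p.
have step (l : 'I_n) : exists xi : 'rV[R]_n,
    (forall m, `|xi 0 m - z 0 m| <= `|p 0 m - z 0 m|) /\
    F (stair z p l.+1) - F (stair z p l) = (p 0 l - z 0 l) * 'D_(evec R l) F xi.
  have Dl := is_derive_line (fun t => Fd (t *: evec R l + stair z p l) l).
  have [th th_le] := MVT_origin Dl (p 0 l - z 0 l).
  rewrite scale0r add0r => E.
  exists (th *: evec R l + stair z p l); split; last by rewrite stairS E mulrC.
  move=> m; rewrite !mxE eqxx /=.
  have [->|lm] := eqVneq m l; first by rewrite ltnn mulr1 addrK.
  by rewrite mulr0 add0r; case: ifP; rewrite ?subrr ?normr0.
have [xi Hxi] := choice step.
exists xi; split=> [l|]; first by have [] := Hxi l.
rewrite -{1}(stairn z p) -{2}(stair0 z p).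
rewrite -(telescope_sumr (fun k => F (stair z p k)) (leq0n n)) big_mkord.
by apply: eq_bigr => l _; have [] := Hxi l.
Qed.

Lemma lipschitz_box F z (r B : R) :
  (forall y (l : 'I_n), derivable F y (evec R l)) ->
  (forall y, in_box z r y -> forall l, `|'D_(evec R l) F y| <= B) ->
  forall p, in_box z r p ->
  `|F p - F z| <= B * \sum_(m < n) `|p 0 m - z 0 m|.
Proof.
move=> Fd FB p pz; have [xi [xiz ->]] := mean_value_partials Fd z p.
rewrite mulr_sumr; apply: le_trans (ler_norm_sum _ _ _) _.
apply: ler_sum => l _; rewrite normrM mulrC ler_wpM2r //.
by apply: FB => m; exact: le_lt_trans (xiz l m) (pz m).
Qed.

Lemma smooth_taylor1 F : smooth F ->
  forall z v, exists C delta : R, 0 < delta /\ forall h : R, `|h| < delta ->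
    `|F (z + h *: v) - F z - h * \sum_(l < n) v 0 l * 'D_(evec R l) F z|
      <= C * h ^+ 2.
Proof.
move=> [Fd Fc] z v.
have [r r0 [B B0 FB]] :=
  continuous_bounded_box z (fun i : 'I_n * 'I_n => Fc [:: i.2; i.1]).
have Dlip (l : 'I_n) y : in_box z r y -> `|'D_(evec R l) F y - 'D_(evec R l) F z|
    <= B * \sum_(m < n) `|y 0 m - z 0 m|.
  apply: (lipschitz_box (F := iter_partial [:: l] F)) => [y' m|y' y'z m].
    exact: Fd [:: l] m y'.
  exact: FB y' y'z (l, m).
pose S := \sum_(m < n) `|v 0 m|.
have S0 : 0 <= S by apply: sumr_ge0.
exists (B * S ^+ 2), (r / (S + 1)); split; first by rewrite divr_gt0 // ltr_wpDl.
move=> h hr.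
have hv m : (z + h *: v) 0 m - z 0 m = h * v 0 m.
  by rewrite !mxE addrAC subrr add0r.
have hS : `|h| * S < r.
  rewrite (@le_lt_trans _ _ (`|h| * (S + 1))) ?ler_wpM2l ?lerDl //.
  by rewrite -ltr_pdivlMr // ltr_wpDl.
have hbox : in_box z r (z + h *: v).
  move=> m; rewrite hv normrM (le_lt_trans _ hS) // ler_wpM2l //.
  by rewrite /S (bigD1 m) //= lerDl sumr_ge0.
have [xi [xiz ->]] := mean_value_partials (fun y l => Fd [::] l y) z (z + h *: v).
rewrite mulr_sumr -sumrB (le_trans (ler_norm_sum _ _ _)) //.
have -> : B * S ^+ 2 * h ^+ 2 = \sum_(l < n) `|h| * `|v 0 l| * (B * (`|h| * S)).
  by rewrite -mulr_suml -mulr_sumr -/S -[h ^+ 2]real_normK ?num_real //; ring.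
apply: ler_sum => l _.
rewrite hv -mulrA -mulrBr -mulrA normrM ler_wpM2l // -mulrBr normrM ler_wpM2l //.
have xibox : in_box z r (xi l) by move=> m; exact: le_lt_trans (xiz l m) (hbox m).
rewrite (le_trans (Dlip l _ xibox)) // ler_wpM2l // mulr_sumr ler_sum // => m _.
by rewrite -normrM -hv xiz.
Qed.

Lemma smooth_deriveE F : smooth F -> forall z v, 'D_v F z = \sum_(l < n) v 0 l * 'D_(evec R l) F z.
Proof.
move=> sF z v; have [C [del [del0 FT]]] := smooth_taylor1 sF z v.
set D := \sum_(l < n) _.
apply: cvg_lim => //; apply/cvgrPdist_le => e e0.
have r0 : 0 < Num.min del (e / (`|C| + 1)) by rewrite lt_min del0 divr_gt0 ?ltr_wpDl.
near=> h.
have : `|h| < Num.min del (e / (`|C| + 1)) by near: h; exact: dnbhs0_lt.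
rewrite lt_min => /andP[hdel he].
have h0 : h != 0 by near: h; exact: nbhs_dnbhs_neq.
rewrite /= /shift (addrC (h *: v) z).
have -> : D - h^-1 *: (F (z + h *: v) - F z) = - h^-1 * (F (z + h *: v) - F z - h * D).
  by rewrite -[_ *: _]/(_ * _); field.
rewrite normrM normrN normfV ler_pdivrMl ?normr_gt0 // (le_trans (FT h hdel)) //.
rewrite -real_normK ?num_real // expr2 mulrA [`|h| * e]mulrC ler_wpM2r //.
rewrite (@le_trans _ _ ((`|C| + 1) * `|h|)) ?ler_wpM2r ?(le_trans (ler_norm C)) ?lerDl //.
by rewrite mulrC -ler_pdivlMr ?ltr_wpDl // ltW.
Unshelve. all: by end_near.
Qed.

End Partials.

Lemma derive_line_ext (R : realType) (V1 V2 W : normedModType R)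
    (f1 : V1 -> W) (f2 : V2 -> W) (a1 v1 : V1) (a2 v2 : V2) :
  (forall h : R, f1 (h *: v1 + a1) = f2 (h *: v2 + a2)) ->
  'D_v1 f1 a1 = 'D_v2 f2 a2.
Proof.
move=> f12; have := f12 0; rewrite !scale0r !add0r => f12a.
rewrite /derive; suff -> : (fun h : R => h^-1 *: ((f1 \o shift a1) (h *: v1) - f1 a1)) =
    (fun h : R => h^-1 *: ((f2 \o shift a2) (h *: v2) - f2 a2)) by [].
by apply/funext => h /=; rewrite /shift f12 f12a.
Qed.

Section BigOPow.
Variable R : realType.
Implicit Types (f g : R -> R) (k : nat).

Definition bigO_pow k f : Prop :=
  exists C delta : R, 0 < delta /\ forall h, 0 < h < delta -> `|f h| <= C * h ^+ k.

Lemma bigO_pow_ext k f g : (forall h, 0 < h -> f h = g h) ->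
  bigO_pow k f -> bigO_pow k g.
Proof.
move=> fg [C [del [del0 fC]]]; exists C, del; split => // h /andP[h0 hdel].
by rewrite -fg ?fC ?h0.
Qed.

Lemma bigO_powD k f g : bigO_pow k f -> bigO_pow k g ->
  bigO_pow k (fun h => f h + g h).
Proof.
move=> [C1 [d1 [d10 fC]]] [C2 [d2 [d20 gC]]].
exists (C1 + C2), (Num.min d1 d2); split; first by rewrite lt_min d10.
move=> h /andP[h0]; rewrite lt_min => /andP[hd1 hd2].
rewrite mulrDl (le_trans (ler_normD _ _)) // lerD ?fC ?gC ?h0 //.
Qed.

Lemma bigO_powZ k (a : R) f : bigO_pow k f -> bigO_pow k (fun h => a * f h).
Proof.
move=> [C [del [del0 fC]]]; exists (`|a| * C), del; split => // h hdel.
by rewrite normrM -mulrA ler_wpM2l ?fC.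
Qed.

Lemma bigO_powB k f g : bigO_pow k f -> bigO_pow k g ->
  bigO_pow k (fun h => f h - g h).
Proof.
move=> fO /(bigO_powZ (-1)) gO.
by apply: bigO_pow_ext (bigO_powD fO gO) => h _; rewrite mulN1r.
Qed.

Lemma bigO_pow_sum k (I : Type) (r : seq I) (F : I -> R -> R) :
  (forall i, bigO_pow k (F i)) -> bigO_pow k (fun h => \sum_(i <- r) F i h).
Proof.
move=> FO; elim: r => [|i r IH].
  by exists 0, 1; split => // h _; rewrite big_nil normr0 mul0r.
by apply: bigO_pow_ext (bigO_powD (FO i) IH) => h _; rewrite big_cons.
Qed.

Lemma bigO_pow_monomial k (a : R) : bigO_pow k (fun h => a * h ^+ k).
Proof.
exists `|a|, 1; split => // h /andP[h0 _].
by rewrite normrM normrX (gtr0_norm h0).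
Qed.

Lemma bigO_powS k f : bigO_pow k.+1 f -> bigO_pow k f.
Proof.
move=> [C [del [del0 fC]]]; exists `|C|, (Num.min del 1); split.
  by rewrite lt_min del0 ltr01.
move=> h /andP[h0]; rewrite lt_min => /andP[hdel h1].
rewrite (le_trans (fC h _)) ?h0 // exprS mulrCA.
rewrite mulrA; apply: ler_wpM2r; first by rewrite exprn_ge0 ?ltW.
apply: le_trans (ler_norm _) _.
by rewrite normrM (gtr0_norm h0) ler_piMl // ltW.
Qed.

Lemma bigO_pow_divS k f : bigO_pow k.+1 f -> bigO_pow k (fun h => f h / h).
Proof.
move=> [C [del [del0 fC]]]; exists C, del; split => // h /andP[h0 hdel].
by rewrite normrM normfV (gtr0_norm h0) ler_pdivrMr // -mulrA -exprSr fC ?h0.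
Qed.

Lemma bigO_pow_scale k (a : R) f : 0 < a -> bigO_pow k f ->
  bigO_pow k (fun h => f (a * h)).
Proof.
move=> a0 [C [del [del0 fC]]]; exists (C * a ^+ k), (del / a); split.
  by rewrite divr_gt0.
move=> h /andP[h0 hdel]; rewrite -mulrA -exprMn fC // mulr_gt0 //=.
by rewrite mulrC -ltr_pdivlMr.
Qed.

Lemma bigO_pow1 f : bigO_pow 1 f ->
  exists C delta : R, 0 < delta /\ forall h, 0 < h < delta -> `|f h| <= C * h.
Proof. by move=> [C [del [del0 fC]]]; exists C, del; split=> // h /fC; rewrite expr1. Qed.

End BigOPow.

Section SmoothDerive.
Variables (R : realType) (n : nat) (F : 'rV[R]_n -> R).
Hypothesis sF : smooth F.

Lemma smooth_deriveDZ z (k : R) u v :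
  'D_(k *: u + v) F z = k * 'D_u F z + 'D_v F z.
Proof.
rewrite !(smooth_deriveE sF) mulr_sumr -big_split; apply: eq_bigr => l _.
by rewrite !mxE mulrDl mulrA.
Qed.

Lemma smooth_taylor z v :
  bigO_pow 2 (fun h => F (z + h *: v) - F z - h * 'D_v F z).
Proof.
have [C [del [del0 FT]]] := smooth_taylor1 sF z v.
exists C, del; split => // h /andP[h0 hdel].
by rewrite (smooth_deriveE sF) FT // gtr0_norm.
Qed.

End SmoothDerive.

Section SpaceTime.
Variables (R : realType) (d : nat) (phi : R -> 'rV[R]_d -> R).

Definition uncurry_tx (z : 'rV[R]_(1 + d)) : R := phi (lsubmx z 0 0) (rsubmx z).

Definition pair_tx (t : R) (y : 'rV[R]_d) : 'rV[R]_(1 + d) := row_mx (const_mx t) y.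

Lemma uncurry_txE t y : uncurry_tx (pair_tx t y) = phi t y.
Proof. by rewrite /uncurry_tx /pair_tx row_mxKl row_mxKr mxE. Qed.

Lemma pair_txDZ k t1 y1 t2 y2 :
  k *: pair_tx t1 y1 + pair_tx t2 y2 = pair_tx (k * t1 + t2) (k *: y1 + y2).
Proof.
rewrite /pair_tx scale_row_mx add_row_mx; congr row_mx.
by apply/matrixP => i j; rewrite !mxE.
Qed.

Lemma derive_space t x a : 'D_a (phi t) x = 'D_(pair_tx 0 a) uncurry_tx (pair_tx t x).
Proof.
by apply: derive_line_ext => h; rewrite pair_txDZ uncurry_txE mulr0 add0r.
Qed.

Lemma derive_time x : derive1 (phi^~ x) 0 = 'D_(pair_tx 1 0) uncurry_tx (pair_tx 0 x).
Proof.
rewrite derive1E; apply: derive_line_ext => h.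
by rewrite pair_txDZ uncurry_txE scaler0 add0r mulr1 !addr0 [_%:A]mulr1.
Qed.

Hypothesis sphi : smooth_tx phi.

Lemma derive_spaceDZ t x k a b :
  'D_(k *: a + b) (phi t) x = k * 'D_a (phi t) x + 'D_b (phi t) x.
Proof.
by rewrite !derive_space -(smooth_deriveDZ sphi) pair_txDZ mulr0 addr0.
Qed.

Lemma derive_space_sum t x (I : Type) (r : seq I) (P : pred I) (k : I -> R)
    (a : I -> 'rV[R]_d) :
  'D_(\sum_(i <- r | P i) k i *: a i) (phi t) x
    = \sum_(i <- r | P i) k i * 'D_(a i) (phi t) x.
Proof.
elim/big_rec2: _ => [|i b y _ IH]; first exact: derive0.
by rewrite derive_spaceDZ IH.
Qed.

Lemma taylor_space t x a :
  bigO_pow 2 (fun h => phi t (x - h *: a) - phi t x + h * 'D_a (phi t) x).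
Proof.
apply: bigO_pow_ext (smooth_taylor (F := uncurry_tx) sphi (pair_tx t x) (pair_tx 0 (- a))) => h _.
rewrite [pair_tx t x + _]addrC pair_txDZ !uncurry_txE mulr0 add0r -derive_space.
have DN : 'D_(- a) (phi t) x = - 'D_a (phi t) x.
  by rewrite -[- a]addr0 -scaleN1r derive_spaceDZ derive0 addr0 mulN1r.
by rewrite scalerN [- _ + x]addrC DN mulrN opprK.
Qed.

Lemma taylor_time x :
  bigO_pow 2 (fun h => phi h x - phi 0 x - h * derive1 (phi^~ x) 0).
Proof.
apply: bigO_pow_ext (smooth_taylor (F := uncurry_tx) sphi (pair_tx 0 x) (pair_tx 1 0)) => h _.
by rewrite [pair_tx 0 x + _]addrC pair_txDZ !uncurry_txE mulr1 addr0 scaler0 add0r derive_time.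
Qed.

End SpaceTime.

Section WeightedShifts.
Variables (R : realType) (d q : nat) (c : 'I_q.+1 -> 'I_d -> int).
Variables (M : 'M[R]_q.+1) (s eps : 'I_q.+1 -> R).
Hypotheses (M_unit : M \in unitmx) (eps0 : eps ord0 = 1).

Local Notation shift_term := (('I_q.+1 -> R) * 'rV[R]_d)%type.

Definition shifts_eval (L : seq shift_term) (g : 'rV[R]_d -> R) (h : R)
    (i : 'I_q.+1) (y : 'rV[R]_d) : R :=
  \sum_(p <- L) p.1 i * g (y - h *: p.2).

Definition collide (a : 'I_q.+1 -> R) (i : 'I_q.+1) : R :=
  \sum_(j < q.+1) Kmat s eps i j * a j.

Definition stream_weight (a : 'I_q.+1 -> R) (k : 'I_q.+1) (i : 'I_q.+1) : R :=
  \sum_(j < q.+1) M i k * invmx M k j * collide a j.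

Definition step_shifts (L : seq shift_term) : seq shift_term :=
  [seq (stream_weight p.1 k, p.2 + cvec R c k) | p <- L, k <- index_enum 'I_q.+1].

Lemma stepE_shifts_eval L g h :
  stepE c M s eps h (shifts_eval L g h) = shifts_eval (step_shifts L) g h.
Proof.
apply/funext => i; apply/funext => y.
rewrite /stepE /shifts_eval /step_shifts big_allpairs_dep /=.
rewrite [RHS]exchange_big /=; apply: eq_bigr => k _.
under eq_bigr => j _ do under eq_bigr => j' _ do rewrite mulr_sumr.
under eq_bigr => j _ do rewrite exchange_big mulr_sumr.
rewrite exchange_big; apply: eq_bigr => p _.
rewrite /stream_weight /collide mulr_suml; apply: eq_bigr => j _.
rewrite -[RHS]mulrA; congr (_ * _); rewrite big_distrl /=; apply: eq_bigr => j' _.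
by rewrite scalerDr opprD addrA addrAC mulrA.
Qed.

Lemma iter_stepE_init n w g h :
  iter n (stepE c M s eps h) (init w g) =
  shifts_eval (iter n step_shifts [:: (w, 0)]) g h.
Proof.
elim: n => [|n IH]; last by rewrite iterS IH stepE_shifts_eval.
apply/funext => i; apply/funext => y.
by rewrite /shifts_eval big_seq1 /= scaler0 subr0.
Qed.

Definition mass (L : seq shift_term) (i : 'I_q.+1) : R := \sum_(p <- L) p.1 i.

Definition first_moment (L : seq shift_term) : 'rV[R]_d :=
  \sum_(p <- L) p.1 ord0 *: p.2.

Lemma KmatE i j :
  Kmat s eps i j = (i == j)%:R - s i * ((i == j)%:R - eps i * (j == ord0)%:R).
Proof. by rewrite /Kmat mxE mul_diag_mx !mxE big_ord1 !mxE /= eq_sym. Qed.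

Lemma sum_delta (a : 'I_q.+1 -> R) i : \sum_(j < q.+1) (i == j)%:R * a j = a i.
Proof.
rewrite (bigD1 i) //= eqxx mul1r big1 ?addr0 // => j ji.
by rewrite eq_sym (negbTE ji) mul0r.
Qed.

Lemma collideE a i : collide a i = a i - s i * (a i - eps i * a ord0).
Proof.
rewrite /collide -[a i](sum_delta a i) -(sum_delta a ord0) mulr_sumr -sumrB.
rewrite mulr_sumr -sumrB; apply: eq_bigr => j _.
by rewrite KmatE [ord0 == j]eq_sym; ring.
Qed.

Lemma collide_conserved a : collide a ord0 = a ord0.
Proof. by rewrite collideE eps0 mul1r subrr mulr0 subr0. Qed.

Lemma sum_stream_weight a i : \sum_(k < q.+1) stream_weight a k i = collide a i.
Proof.
rewrite /stream_weight exchange_big /= -[RHS]sum_delta; apply: eq_bigr => j _.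
have /matrixP/(_ i j) := mulmxV M_unit; rewrite !mxE => <-.
by rewrite mulr_suml.
Qed.

Lemma mass_step L i : mass (step_shifts L) i = \sum_(p <- L) collide p.1 i.
Proof.
rewrite /mass /step_shifts big_allpairs_dep /=.
by apply: eq_bigr => p _; rewrite sum_stream_weight.
Qed.

Lemma mass_step_collide L : mass (step_shifts L) = collide (mass L).
Proof.
apply/funext => i; rewrite mass_step /collide /mass exchange_big /=.
by apply: eq_bigr => j _; rewrite mulr_sumr.
Qed.

Lemma first_moment_step L : first_moment (step_shifts L) =
  first_moment L + \sum_(j < q.+1) mass (step_shifts L) j *: Gcoef c M ord0 j.
Proof.
rewrite /first_moment big_allpairs_dep /=.
under eq_bigr => p _ do rewrite (eq_bigr _ (fun k _ => scalerDr _ _ _)).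
under eq_bigr => p _ do rewrite big_split /= -scaler_suml sum_stream_weight collide_conserved.
rewrite big_split /=; congr (_ + _).
under [RHS]eq_bigr => j _ do rewrite mass_step scaler_suml.
rewrite [RHS]exchange_big /=; apply: eq_bigr => p _.
under [RHS]eq_bigr => j _ do rewrite /Gcoef scaler_sumr.
rewrite [RHS]exchange_big /=; apply: eq_bigr => k _.
rewrite /stream_weight scaler_suml; apply: eq_bigr => j _.
by rewrite scalerA mulrC.
Qed.

Definition drift : 'rV[R]_d := \sum_(r < q.+1) eps r *: Gcoef c M ord0 r.

Definition consistent_weights (a : 'I_q.+1 -> R) : Prop :=
  a ord0 = 1 /\ forall r, r != ord0 -> Gcoef c M ord0 r != 0 -> a r = eps r.

Lemma consistent_collide a : consistent_weights a -> consistent_weights (collide a).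
Proof.
move=> [a0 aG]; split=> [|r r0 G0]; first by rewrite collide_conserved.
by rewrite collideE a0 mulr1 aG // subrr mulr0 subr0.
Qed.

Lemma consistent_drift a : consistent_weights a ->
  \sum_(j < q.+1) a j *: Gcoef c M ord0 j = drift.
Proof.
move=> [a0 aG]; apply: eq_bigr => r _.
have [->|r0] := eqVneq r ord0; first by rewrite a0 eps0.
by have [->|G0] := eqVneq (Gcoef c M ord0 r) 0; rewrite ?scaler0 ?aG.
Qed.

Section Iteration.
Variable w : 'I_q.+1 -> R.
Hypothesis w_consistent : consistent_weights w.

Local Notation shifts n := (iter n step_shifts [:: (w, 0)]).

Lemma consistent_mass_iter n : consistent_weights (mass (shifts n)).
Proof.
elim: n => [|n IH]; last by rewrite iterS mass_step_collide; apply: consistent_collide.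
by rewrite /mass /=; under eq_fun => i do rewrite big_seq1.
Qed.

Lemma first_moment_iter n : first_moment (shifts n) = n%:R *: drift.
Proof.
elim: n => [|n IH]; first by rewrite /first_moment big_seq1 scaler0 scale0r.
rewrite iterS first_moment_step IH -iterS (consistent_drift (consistent_mass_iter n.+1)).
by rewrite -[n.+1]addn1 natrD scalerDl scale1r.
Qed.

End Iteration.

End WeightedShifts.

Section StartingSchemes.
Variables (R : realType) (d q : nat) (c : 'I_q.+1 -> 'I_d -> int).
Variables (M : 'M[R]_q.+1) (s eps w : 'I_q.+1 -> R).
Hypotheses (M_unit : M \in unitmx) (eps0 : eps ord0 = 1).
Hypothesis w_consistent : consistent_weights c M eps w.
Variables (phi : R -> 'rV[R]_d -> R) (x : 'rV[R]_d).
Hypothesis sphi : smooth_tx phi.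

Lemma derive_drift : 'D_(drift c M eps) (phi 0) x =
  Gop c M ord0 ord0 (phi 0) x + \sum_(r < q.+1 | r != ord0) Gop c M ord0 r (phi 0) x * eps r.
Proof.
rewrite /drift (derive_space_sum sphi) (bigD1 ord0) //= eps0 mul1r.
by congr (_ + _); apply: eq_bigr => r _; rewrite mulrC.
Qed.

Lemma start_op_taylor n : bigO_pow 2 (fun h =>
  start_op c M s eps h n w (phi 0) x - phi 0 x + h * (n%:R * 'D_(drift c M eps) (phi 0) x)).
Proof.
set L := iter n (step_shifts c M s eps) [:: (w, 0)].
have mass1 : \sum_(p <- L) p.1 ord0 = 1 := (consistent_mass_iter s M_unit eps0 w_consistent n).1.
have moment : \sum_(p <- L) p.1 ord0 * 'D_(p.2) (phi 0) x = n%:R * 'D_(drift c M eps) (phi 0) x.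
  rewrite -(derive_space_sum sphi) -/(first_moment L).
  rewrite (first_moment_iter s M_unit eps0 w_consistent).
  by rewrite -[_ *: drift _ _ _]addr0 (derive_spaceDZ sphi) derive0 addr0.
apply: bigO_pow_ext
  (bigO_pow_sum L (fun p => bigO_powZ (p.1 ord0) (taylor_space sphi 0 x p.2))) => h _.
rewrite /start_op iter_stepE_init -/L /shifts_eval -moment mulr_sumr.
rewrite -[in RHS](mul1r (phi 0 x)) -mass1 mulr_suml -sumrB -big_split /=.
by apply: eq_bigr => p _; ring.
Qed.

End StartingSchemes.

Theorem corollary1 (R : realType) (d q : nat) (c : 'I_q.+1 -> 'I_d -> int)
    (M : 'M[R]_q.+1) (s eps w : 'I_q.+1 -> R) (lambda : R) :
  (0 < d)%N ->
  M \in unitmx ->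
  (forall i : 'I_q.+1, i != ord0 -> 0 < s i <= 2) ->
  eps ord0 = 1 ->
  0 < lambda ->
  w ord0 = 1 ->
  (forall r : 'I_q.+1, r != ord0 -> Gcoef c M ord0 r != 0 -> w r = eps r) ->
  (forall (n : nat), (0 < n)%N ->
     forall (phi : R -> 'rV[R]_d -> R), smooth_tx phi ->
     forall x : 'rV[R]_d,
       (* order O(1) *)
       (exists C delta : R, 0 < delta /\
          forall dx : R, 0 < dx < delta ->
            `| start_op c M s eps dx n w (phi 0) x - phi 0 x | <= C * dx)
       /\
       (* next order: modified equation divided by n dt, dt = dx / lambda *)
       (exists C delta : R, 0 < delta /\
          forall dx : R, 0 < dx < delta ->
            `| (phi (n%:R * (dx / lambda)) x - start_op c M s eps dx n w (phi 0) x)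
                 / (n%:R * (dx / lambda))
               - (derive1 (fun t => phi t x) 0
                  + lambda * (Gop c M ord0 ord0 (phi 0) x
                     + \sum_(r < q.+1 | r != ord0) Gop c M ord0 r (phi 0) x * eps r)) |
              <= C * dx)) /\
  (* initial conserved moment = point-wise discretisation of the initial datum *)
  (forall (u0 : 'rV[R]_d -> R) (dx : R) (k : 'I_d -> int),
     init w u0 ord0 (dx *: \row_l (k l)%:~R) = lattice_discr u0 dx k).
Proof.
move=> _ M_unit _ eps0 lambda0 w0 wG.
split=> [n n0 phi sphi x|u0 dx k]; last by rewrite /init /lattice_discr w0 mul1r.
have w_consistent : consistent_weights c M eps w by [].
have Tstart := start_op_taylor s M_unit eps0 w_consistent x sphi n.
rewrite -derive_drift //.
set D := 'D_(drift c M eps) (phi 0) x in Tstart *.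
split; apply: bigO_pow1.
  have Tlin := bigO_pow_monomial 1 (n%:R * D).
  apply: bigO_pow_ext (bigO_powB (bigO_powS Tstart) Tlin) => h _.
  by rewrite expr1; ring.
have a0 : 0 < n%:R / lambda by rewrite divr_gt0 ?ltr0n.
have Ttime := bigO_pow_scale a0 (taylor_time sphi x).
apply: bigO_pow_ext
  (bigO_powZ (n%:R / lambda)^-1 (bigO_pow_divS (bigO_powB Ttime Tstart))) => h h0.
rewrite [n%:R * (h / lambda)]mulrA mulrAC.
by field; rewrite !gt_eqF ?ltr0n.
Qed.
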